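(* Let $G$ be a strongly connected digraph and $H$ its undirectization. If $H$ has at least two cycles with distinct vertex sets, then $G$ has at least two directed cycles with distinct vertex sets.
   Context: A digraph $G=(V,E)$, no loops or multiple edges. The undirectization $H$ is the undirected simple graph with edge $\{i,j\}$ whenever $(i,j)\in E$ or $(j,i)\in E$. A cycle of $H$ is a closed path of length $\ge3$ up to cyclic permutations and reversal; a directed cycle of $G$ is a closed directed path $(i_0,\dots,i_\ell=i_0)$ with $i_0,\dots,i_{\ell-1}$ distinct and $\ell\ge3$, up to cyclic permutations. The vertex set of a (directed) cycle is the set of its vertices. $G$ is strongly connected if any vertex can be reached from any other by a directed walk. *)

(* A digraph on a finite vertex type T is an irreflexive
   relation e : rel T ((i,j) is an arc iff e i j). *)
From mathcomp Require Import all_boot.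
Set Implicit Arguments.
Unset Strict Implicit.
Unset Printing Implicit Defensive.

Definition loopless (T : finType) (e : rel T) : Prop := irreflexive e.

Definition undirectize (T : finType) (e : rel T) : rel T :=
  fun i j => e i j || e j i.

Definition strongly_connected (T : finType) (e : rel T) : Prop :=
  forall x y : T, connect e x y.

(* For r = e it is a directed cycle of G; for r = undirectize e it is a cycle
   of H (distinct vertices and l >= 3 make it a genuine cycle). *)
Definition is_cycle (T : finType) (r : rel T) (s : seq T) : Prop :=
  [/\ uniq s, 3 <= size s & cycle r s].

Definition vset (T : finType) (s : seq T) : {set T} := [set x in s].

Definition directed_cycle (T : finType) (e : rel T) (s : seq T) : Prop :=
  is_cycle e s.

Definition undirected_cycle (T : finType) (e : rel T) (s : seq T) : Prop :=
  is_cycle (undirectize e) s.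

From mathcomp Require Import all_boot zify.
From Stdlib Require Import Classical.

Set Implicit Arguments.
Unset Strict Implicit.
Unset Printing Implicit Defensive.

(* Argue by contradiction: assume that all directed cycles of the
   strongly connected loopless digraph G have one and the same vertex set.
   Under that assumption (section [UniqueCycleVertexSet]) every cycle Z of the
   undirectization H has the vertex set of some directed cycle, so any two
   cycles of H have equal vertex sets.
   - A directed cycle D has no shortcut chord, so an arc between two vertices
     of D joins D-neighbours ([chord_next]).
   - By strong connectivity an arc whose reverse is missing lies on a directed
     cycle ([arc_on_cycle]); hence an edge of H with an endpoint off a
     directed cycle D is an arc of G in both directions ([off_cycle_arc]).
   If Z is not a directed cycle, it uses some arc b -> a backwards only; take a
   directed cycle D through b -> a.  If Z left D, a stretch of Z outside D
   would join two distinct vertices of D and close up with an arc of D into a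
   directed cycle leaving D ([cycle_within]).  So Z lies in D; if D had a
   vertex u outside Z, then numbering D from u, the vertex of Z with the
   largest number would have both Z-neighbours equal to its predecessor
   ([cycle_covers]).  Hence Z and D have the same vertex set. *)

Section CycleFacts.
Variable T : finType.
Implicit Types (r : rel T) (s : seq T).

Lemma rot_is_cycle r n s : is_cycle r s -> is_cycle r (rot n s).
Proof. by case=> U S C; split; rewrite ?rot_uniq ?size_rot ?rot_cycle. Qed.

Lemma split_last (P : pred T) s : has P s ->
  exists s1 x s2, [/\ s = s1 ++ x :: s2, P x & ~~ has P s2].
Proof.
rewrite -has_rev -{2}(revK s); case/split_find=> x s1 s2 Px nPs1.
exists (rev s2), x, (rev s1).
by rewrite has_rev rev_cat rev_rcons.
Qed.

Lemma index_next (u : T) q x : uniq (u :: q) -> x \in u :: q ->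
  next (u :: q) x != u -> index (next (u :: q) x) (u :: q) = (index x (u :: q)).+1.
Proof.
move=> U xD; rewrite next_nth xD.
have [iq | qi] := ltnP (index x (u :: q)) (size q).
- by rewrite -[nth u q _]/(nth u (u :: q) _.+1) index_uniq.
- by rewrite nth_default ?eqxx.
Qed.

Lemma cycle_neighbours r s x : is_cycle r s -> x \in s ->
  exists y y', [/\ y \in s, y' \in s, y != y', r x y & r y' x].
Proof.
move=> sc /rot_to[i p Ep]; have := rot_is_cycle i sc; rewrite Ep.
case: p Ep => [|y [|z m]] Ep [U S C] //.
have mem_s v : v \in [:: x, y, z & m] -> v \in s by rewrite -Ep mem_rot.
exists y, (last z m); split.
- by apply: mem_s; rewrite !inE eqxx orbT.
- by apply: mem_s; rewrite in_cons [_ \in y :: _]in_cons (mem_last z m) !orbT.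
- by apply: contraTneq U => ->; rewrite /= (mem_last z m) andbF.
- by case/andP: C.
- by move: C; rewrite /cycle rcons_path => /andP[].
Qed.

Lemma path_witness r r' x p : path r x p -> ~~ path r' x p ->
  exists a b, [/\ a \in x :: p, b \in x :: p, r a b & ~~ r' a b].
Proof.
elim: p x => [//|y p IH] x /= /andP[rxy rp].
have [r'xy /= | nr'xy _] := boolP (r' x y).
  case/(IH y rp)=> a [b [aI bI rab nr'ab]].
  by exists a, b; split; rewrite // inE ?aI ?bI orbT.
by exists x, y; rewrite !inE !eqxx orbT.
Qed.
End CycleFacts.

Section StronglyConnectedDigraph.
Variables (T : finType) (e : rel T).
Hypothesis e_loopless : loopless e.
Hypothesis e_strong : strongly_connected e.

(* Closing an arc x -> y with a shortest directed path back from y to x gives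
   either the reverse arc or a directed cycle through x and y. *)
Lemma arc_on_cycle x y : e x y ->
  e y x \/ exists2 D, directed_cycle e D & (x \in D) && (y \in D).
Proof.
move=> exy; have /connectP[p Pp Lp] := e_strong y x.
case: (shortenP Pp) Lp => p' Pp' Up' _.
case: p' Pp' Up' => [|z [|w m]] /= Pp' Up' Lp.
- by rewrite Lp e_loopless in exy.
- by left; rewrite Lp; case/andP: Pp'.
- right; exists [:: y, z, w & m].
    split=> //; rewrite /cycle /= rcons_path -Lp exy andbT.
    by case/and3P: Pp' => -> -> ->.
  by rewrite mem_head Lp in_cons [_ \in z :: _]in_cons (mem_last w m) !orbT.
Qed.

Section UniqueCycleVertexSet.
(* The assumption refuted by the main theorem: all directed cycles of G have
   the same vertex set. *)
Hypothesis same_vset : forall c1 c2,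
  directed_cycle e c1 -> directed_cycle e c2 -> vset c1 = vset c2.

Lemma mem_same_vset x c1 c2 : directed_cycle e c1 -> directed_cycle e c2 ->
  (x \in c1) = (x \in c2).
Proof. by move=> c1D c2D; have := same_vset c1D c2D => /setP/(_ x); rewrite !inE. Qed.

(* A chord a -> b of the directed cycle b :: s ++ a :: t would give the shorter
   directed cycle b :: s ++ [:: a] missing the vertices of t: so s or t is
   empty. *)
Lemma no_shortcut b s a t : directed_cycle e (b :: s ++ a :: t) -> e a b ->
  s = [::] \/ t = [::].
Proof.
case: s t => [|x s] [|y t] Dc eab; [by left | by left | by right | exfalso].
have E : b :: (x :: s) ++ a :: y :: t = (b :: x :: s ++ [:: a]) ++ y :: t.
  by rewrite /= -catA.
have [U _ C] := Dc; rewrite E cat_uniq in U; case/and3P: U => U1 /norP[yS _] _.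
have Dshort : directed_cycle e (b :: x :: s ++ [:: a]).
  split=> //; first by rewrite /= size_cat addn1.
  move: C; rewrite E /= rcons_cat cat_path => /andP[exb /andP[P1 _]].
  by rewrite exb rcons_path P1 last_cat eab.
have := mem_same_vset y Dshort Dc.
by rewrite (negbTE yS) E mem_cat mem_head orbT.
Qed.

Lemma chord_next D a b : directed_cycle e D -> a \in D -> b \in D -> e a b ->
  next D a = b \/ next D b = a.
Proof.
move=> Dc aD bD eab.
have ab : a != b by apply: contraTneq eab => ->; rewrite e_loopless.
have [i q Eq] := rot_to bD.
have aq : a \in q by move: aD; rewrite -(mem_rot i) Eq inE (negbTE ab).
case/splitPr: aq Eq => s t Eq.
have Dr : directed_cycle e (b :: s ++ a :: t) by rewrite -Eq; exact: rot_is_cycle.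
have [UD _ _] := Dc; have [Ur _ _] := Dr.
rewrite -!(next_rot i UD) Eq.
case: (no_shortcut Dr eab) => [-> | Et]; first by right; rewrite /= eqxx.
left; move: (cycle_next Ur); rewrite Et /cycle rcons_path => /andP[_ /eqP].
by rewrite /= last_cat.
Qed.

(* An edge of H with an endpoint off a directed cycle D is an arc of G: if only
   its reverse were, that reverse would lie on a directed cycle, hence in D. *)
Lemma off_cycle_arc D a b : directed_cycle e D -> undirectize e a b ->
  (a \notin D) || (b \notin D) -> e a b.
Proof.
move=> Dc /orP[// | eba] off.
case: (arc_on_cycle eba) => [// | [D' D'c /andP[bD' aD']]].
by move: off; rewrite -(mem_same_vset a D'c Dc) -(mem_same_vset b D'c Dc) aD' bD'.
Qed.

Lemma off_cycle_path D x w b : directed_cycle e D -> w != [::] ->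
  ~~ has (mem D) w -> path (undirectize e) x (rcons w b) -> path e x (rcons w b).
Proof.
move=> Dc; elim: w x => [// | y w IH] x _ /norP[yD wD] /= /andP[Hxy Pw].
rewrite (off_cycle_arc Dc Hxy) ?yD ?orbT //=.
case: w IH wD Pw => [|z w] IH wD Pw; last exact: IH.
by move: Pw => /= /andP[Hyb _]; rewrite (off_cycle_arc Dc Hyb) ?yD.
Qed.

(* No directed detour: a directed path from a to b (distinct vertices of D)
   through vertices off D, followed by the arc of D from b to a, would be a
   directed cycle leaving D. *)
Lemma no_detour D a b w : directed_cycle e D -> a \in D -> b \in D -> a != b ->
  w != [::] -> uniq w -> ~~ has (mem D) w -> path e a (rcons w b) -> False.
Proof.
move=> Dc aD bD ab wn Uw wD Pw.
have [i q Eq] := rot_to bD.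
have aq : a \in q by move: aD; rewrite -(mem_rot i) Eq inE (negbTE ab).
case/splitPr: aq Eq => s t Eq.
have Dr : directed_cycle e (b :: s ++ a :: t) by rewrite -Eq; exact: rot_is_cycle.
have E u : b :: s ++ a :: u = (b :: s ++ [:: a]) ++ u by rewrite /= -catA.
have arcD : {subset b :: s ++ [:: a] <= D}.
  by move=> v vS; rewrite -(mem_rot i) Eq E mem_cat vS.
have Dd : directed_cycle e (b :: s ++ a :: w).
  have [Ur _ Cr] := Dr; split.
  - rewrite E cat_uniq Uw andbT; move: Ur; rewrite E cat_uniq => /andP[-> _] /=.
    by apply: contra wD => /hasP[v vw /arcD vD]; apply/hasP; exists v.
  - by rewrite /= size_cat /=; case: w wn {Uw wD Pw} => // ? ? _; rewrite !addnS.
  - move: Cr; rewrite E /= rcons_cat cat_path => /andP[P1 _].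
    by rewrite -cat_rcons rcons_cat cat_path -cats1 P1 last_cat.
case: w wn Uw wD Pw Dd => [// | y w] _ _ /norP[yD _] _ Dd.
have := mem_same_vset y Dd Dc.
by rewrite (negbTE (yD : y \notin D)) !(mem_cat, inE) eqxx !orbT.
Qed.

(* A cycle of H through two distinct vertices of D lies inside D: otherwise a
   maximal stretch of it outside D would be a forbidden detour. *)
Lemma cycle_within D Z x y : directed_cycle e D -> undirected_cycle e Z ->
  x \in Z -> y \in Z -> x \in D -> y \in D -> x != y -> {subset Z <= D}.
Proof.
move=> Dc Zc xZ yZ xD yD xy v vZ; apply/negPn/negP => vD.
have [i r Er] := rot_to vZ.
have Zr := rot_is_cycle i Zc; rewrite Er in Zr.
have inr z : z \in Z -> z \in D -> z \in r.
  move=> zZ zD; move: zZ; rewrite -(mem_rot i) Er inE => /orP[/eqP zv | //].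
  by move: vD; rewrite -zv zD.
have xr := inr x xZ xD; have yr := inr y yZ yD.
have [s1 [a [p1 [Er1 aD p1D]]]] : exists s1 a p1,
    [/\ r = s1 ++ a :: p1, a \in D & ~~ has (mem D) p1].
  by apply: split_last; apply/hasP; exists x.
have s1D : has (mem D) s1.
  apply: contraNT xy => s1D.
  have onlya z : z \in r -> z \in D -> z = a.
    rewrite Er1 mem_cat inE => /or3P[zs1 | /eqP // | zp1] zD.
    + by case/hasP: s1D; exists z.
    + by case/hasP: p1D; exists z.
  by rewrite (onlya x xr xD) (onlya y yr yD).
move: Er1; case/split_find: s1D => b p2 s2 bD p2D Er1.
pose w := p1 ++ v :: p2.
have Zw : undirected_cycle e (a :: rcons w b ++ s2).
  have Er2 : v :: r = (v :: rcons p2 b ++ s2) ++ a :: p1 by rewrite Er1.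
  have := rot_is_cycle (size (v :: rcons p2 b ++ s2)) Zr.
  by rewrite Er2 rot_size_cat /w rcons_cat /= -catA.
have [UZw _ CZw] := Zw.
have ab : a != b.
  by apply: contraTneq UZw => ->; rewrite /= mem_cat mem_rcons mem_head.
have Uw : uniq w by move: UZw; rewrite /= cat_uniq rcons_uniq => /and4P[_ /andP[_ ->]].
have wD : ~~ has (mem D) w by rewrite has_cat /= !negb_or p1D p2D vD.
have Pw : path (undirectize e) a (rcons w b).
  by move: CZw; rewrite /cycle /= rcons_cat cat_path => /andP[].
have wn : w != [::] by rewrite /w; case: (p1).
exact: no_detour Dc aD bD ab wn Uw wD (off_cycle_path Dc wn wD Pw).
Qed.

(* Otherwise number D from a vertex u off Z:
   every edge of Z joins consecutive numbers, and the vertex of Z with largest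
   number would have both of its Z-neighbours numbered one less. *)
Lemma cycle_covers D Z : directed_cycle e D -> undirected_cycle e Z ->
  {subset Z <= D} -> {subset D <= Z}.
Proof.
move=> Dc Zc ZD u uD; apply/negPn/negP => uZ.
have [i q Eq] := rot_to uD.
have Dq : directed_cycle e (u :: q) by rewrite -Eq; exact: rot_is_cycle.
have [Uq _ _] := Dq.
pose idx z := index z (u :: q).
have inDq z : z \in Z -> z \in u :: q by move=> zZ; rewrite -Eq mem_rot ZD.
have succ x y : x \in Z -> y \in Z -> next (u :: q) x = y -> idx y = (idx x).+1.
  move=> xZ yZ nxy; rewrite /idx -nxy index_next ?inDq // nxy.
  by apply: contraNneq uZ => <-.
have arc x y : x \in Z -> y \in Z -> e x y -> idx y = (idx x).+1 \/ idx x = (idx y).+1.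
  move=> xZ yZ exy; case: (chord_next Dq (inDq x xZ) (inDq y yZ) exy) => nxt.
  - by left; apply: succ.
  - by right; apply: succ.
have [x0 x0Z] : exists x0, x0 \in Z.
  by case: Zc => _; case: (Z) => // x0 ? _ _; exists x0; rewrite mem_head.
have [x xZ xmax] := @arg_maxnP _ x0 (fun z => z \in Z) idx x0Z.
have down z : z \in Z -> undirectize e x z -> idx x = (idx z).+1.
  move=> zZ xz; have := xmax z zZ.
  by case/orP: xz => [/(arc x z xZ zZ) | /(arc z x zZ xZ)] []; lia.
have [y [y' [yZ y'Z yy' xy y'x]]] := cycle_neighbours Zc xZ.
have Eyy' : idx y = idx y'.
  have := down y yZ xy; have := down y' y'Z; rewrite /undirectize orbC => /(_ y'x).
  lia.
by move: yy'; rewrite (index_inj u (inDq y yZ) (inDq y' y'Z) Eyy') eqxx.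
Qed.

(* Every cycle of H has the vertex set of a directed cycle: either it is one,
   or a directed cycle through one of its one-way arcs has its vertex set. *)
Lemma cycle_vset_directed Z : undirected_cycle e Z ->
  exists2 D, directed_cycle e D & vset D = vset Z.
Proof.
move=> Zc; have [Zdir | Znot] := boolP (cycle e Z); first by case: Zc; exists Z.
have [a [b [aZ bZ Hab nab]]] : exists a b, [/\ a \in Z, b \in Z, undirectize e a b & ~~ e a b].
  case: Z Zc Znot => [[] // | z r [_ _ CZ] Znot].
  have [a [b [aI bI Hab nab]]] := path_witness CZ Znot.
  have sub v : v \in z :: rcons r z -> v \in z :: r.
    by rewrite in_cons mem_rcons => /orP[/eqP-> | //]; exact: mem_head.
  by exists a, b; split; rewrite ?sub.
have eba : e b a by move: Hab; rewrite /undirectize (negbTE nab).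
have [eab | [D Dc /andP[bD aD]]] := arc_on_cycle eba; first by rewrite eab in nab.
have ab : a != b by apply: contraTneq eba => ->; rewrite e_loopless.
have ZD := cycle_within Dc Zc aZ bZ aD bD ab.
exists D => //; apply/setP => v; rewrite !inE.
by apply/idP/idP => [/(cycle_covers Dc Zc ZD) | /ZD].
Qed.

End UniqueCycleVertexSet.
End StronglyConnectedDigraph.

Theorem lemma2p5 (T : finType) (e : rel T) :
  loopless e -> strongly_connected e ->
  (exists s1 s2 : seq T,
      [/\ undirected_cycle e s1, undirected_cycle e s2 & vset s1 != vset s2]) ->
  exists c1 c2 : seq T,
    [/\ directed_cycle e c1, directed_cycle e c2 & vset c1 != vset c2].
Proof.
move=> e_loopless e_strong [s1 [s2 [Z1 Z2 Zneq]]].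
apply: NNPP => no_two.
have same_vset c1 c2 : directed_cycle e c1 -> directed_cycle e c2 -> vset c1 = vset c2.
  by move=> D1 D2; apply/eqP; apply: contraT => neq; case: no_two; exists c1, c2.
have [D1 D1c E1] := cycle_vset_directed e_loopless e_strong same_vset Z1.
have [D2 D2c E2] := cycle_vset_directed e_loopless e_strong same_vset Z2.
by rewrite -E1 -E2 (same_vset _ _ D1c D2c) eqxx in Zneq.
Qed.
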